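(* Let $\mathcal{H}\subseteq\mathcal{F}$ be saturated fusion systems over a finite $p$-group $S$, let $\mathcal{C}$ be a family of subgroups of $S$ closed under $\mathcal{F}$-conjugation and taking overgroups, let $P\in\mathcal{C}$ be fully $\mathcal{F}$-normalized, and put $\mathcal{F}_1=\mathcal{H}$, $\mathcal{F}_2=N_{\mathcal{F}}(P)$, $\mathcal{F}_e=N_{\mathcal{H}}(P)$, $S'=N_S(P)$ and $\Lambda=\{\mathcal{F}_1,\mathcal{F}_2,\mathcal{F}_e\}$. Assume that $\mathcal{F}=\langle\mathcal{H},\operatorname{Aut}_{\mathcal{F}}(P)\rangle_S$. Then $\operatorname{Rep}_{\mathcal{F}}(Q,\Lambda)$ is a tree for every $Q\le S$ that is not $\mathcal{F}$-conjugate to a proper subgroup of $P$. In particular $C_\Lambda(Q):=H_1(\operatorname{Rep}_{\mathcal{F}}(Q,\Lambda);\mathcal{R})=0$ for every such $Q$ and every commutative ring $\mathcal{R}$, and if $P$ is minimal under inclusion in $\mathcal{C}$ then the functor $C_\Lambda$ on $\mathcal{O}_{\mathcal{C}}(\mathcal{F})$ is zero.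
   Context: $\langle\ldots\rangle_S$ is the smallest fusion system over $S$ containing the listed data. $N_{\mathcal{F}}(P)$ is the fusion system over $N_S(P)$ with morphisms those $\mathcal{F}$-morphisms $\varphi:A\to B$ extending to $\hat\varphi:AP\to BP$ in $\mathcal{F}$ with $\hat\varphi(P)=P$. For a fusion system $\mathcal{E}$ over $S_{\mathcal{E}}$, $\operatorname{Rep}_{\mathcal{F}}(Q,\mathcal{E})=\operatorname{Hom}_{\mathcal{F}}(Q,S_{\mathcal{E}})/\sim$ with $\varphi\sim\psi$ iff $\theta\varphi=\psi$ for an $\mathcal{E}$-isomorphism $\theta:\varphi(Q)\to\psi(Q)$. $\operatorname{Rep}_{\mathcal{F}}(Q,\Lambda)$ is the bipartite graph with vertices $\operatorname{Rep}_{\mathcal{F}}(Q,\mathcal{F}_1)\sqcup\operatorname{Rep}_{\mathcal{F}}(Q,\mathcal{F}_2)$ and edges $\operatorname{Rep}_{\mathcal{F}}(Q,\mathcal{F}_e)$, the edge $[\varphi]_{\mathcal{F}_e}$ joining $[\varphi]_{\mathcal{F}_2}$ and $[\iota_{S'}^S\varphi]_{\mathcal{F}_1}$; $Q\mapsto H_1(\operatorname{Rep}_{\mathcal{F}}(Q,\Lambda);\mathcal{R})$ is a functor on $\mathcal{O}_{\mathcal{C}}(\mathcal{F})^{op}$ via precomposition. *)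

From HB Require Import structures.
From mathcomp Require Import all_boot all_order all_algebra all_fingroup all_solvable.
From Stdlib Require Import ClassicalEpsilon.

Set Implicit Arguments.
Unset Strict Implicit.
Unset Printing Implicit Defensive.

Local Open Scope group_scope.

Definition asb (P : Prop) : bool :=
  if excluded_middle_informative P then true else false.

Section Fusion.
Variable gT : finGroupType.

(* A "fusion predicate": F A B f  means  f ∈ Hom_F(A, B).  Morphisms are
   functions gT -> gT, only their restriction to A matters (axiom fs_ext). *)
Definition fmor := {group gT} -> {group gT} -> (gT -> gT) -> Prop.

Definition inj_hom (A B : {set gT}) (f : gT -> gT) :=
  [/\ {in A &, {morph f : x y / x * y}}, {in A &, injective f}
    & f @: A \subset B].

Definition img (f : gT -> gT) (A : {set gT}) : {group gT} := <<[set f x | x in A]>>%G.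

Definition conj_mor (s : gT) : gT -> gT := fun x => x ^ s.

(* Fusion system over S: a category with objects the subgroups of S,
   Hom_S(A,B) ⊆ Hom_F(A,B) ⊆ Inj(A,B), closed under composition, and every
   morphism is an F-isomorphism onto its image (with F-inverse) followed by
   an inclusion. *)
Record fusion_system (S : {group gT}) (F : fmor) : Prop := {
  fs_sub : forall A B f, F A B f -> A \subset S /\ B \subset S;
  fs_hom : forall A B f, F A B f -> inj_hom A B f;
  fs_ext : forall A B f f', F A B f -> {in A, f =1 f'} -> F A B f';
  fs_conj : forall (A B : {group gT}) s, A \subset S -> B \subset S ->
    s \in S -> A :^ s \subset B -> F A B (conj_mor s);
  fs_comp : forall A B C f g, F A B f -> F B C g -> F A C (g \o f);
  fs_img : forall A B f, F A B f -> F A (img f A) f;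
  fs_inv : forall A B f, F A B f ->
    exists g, F (img f A) A g /\ {in A, cancel f g}
}.

Definition subsystem (E F : fmor) := forall A B f, E A B f -> F A B f.

Definition AutF (F : fmor) (P : {group gT}) : {set {perm gT}} :=
  [set a in Aut P | asb (F P P a)].

Definition AutS (S P : {group gT}) : {set {perm gT}} :=
  [set a in Aut P | asb (exists2 g, g \in 'N_S(P) & {in P, a =1 conj_mor g})].

Definition fully_normalized (S : {group gT}) (F : fmor) (P : {group gT}) :=
  forall f, F P S f -> #|'N_S(img f P)| <= #|'N_S(P)|.

Definition fully_centralized (S : {group gT}) (F : fmor) (P : {group gT}) :=
  forall f, F P S f -> #|'C_S(img f P)| <= #|'C_S(P)|.

Definition Nphi (S : {group gT}) (f : gT -> gT) (P : {group gT}) : {set gT} :=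
  [set x in 'N_S(P) | asb (exists2 y, y \in 'N_S(img f P) &
                              {in P, forall z, f (z ^ x) = (f z) ^ y})].

Definition saturated (p : nat) (S : {group gT}) (F : fmor) :=
  [/\ fusion_system S F,
      forall P : {group gT}, P \subset S -> fully_normalized S F P ->
        fully_centralized S F P /\ p.-Sylow(AutF F P) (AutS S P)
    &
      forall (P : {group gT}) f, F P S f ->
        fully_centralized S F (img f P) ->
        forall N : {group gT}, (N : {set gT}) = Nphi S f P ->
          exists g, F N S g /\ {in P, g =1 f}].

Definition generated_by (S : {group gT}) (X F : fmor) :=
  forall A B f, F A B f <->
    (forall E, fusion_system S E -> subsystem X E -> E A B f).

Definition NF (S : {group gT}) (F : fmor) (P : {group gT}) : fmor :=
  fun A B f =>
    [/\ A \subset 'N_S(P), B \subset 'N_S(P), F A B f &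
        exists fh, [/\ F (A <*> P)%G (B <*> P)%G fh, {in A, fh =1 f}
                     & fh @: P = P]].

Definition mors := {ffun gT -> gT}.

(* the class [phi]_E in Rep_F(Q,E) = Hom_F(Q,T)/~, T = S_E, as a set *)
Definition rep_cls (F : fmor) (Q T : {group gT}) (E : fmor) (phi : mors)
  : {set mors} :=
  [set psi : mors | asb (F Q T psi /\
     exists theta, [/\ E (img phi Q) (img psi Q) theta,
                       theta @: img phi Q = img psi Q
                     & {in Q, forall x, theta (phi x) = psi x}])].

Definition Hom_set (F : fmor) (Q T : {group gT}) : {set mors} :=
  [set phi : mors | asb (F Q T phi)].

Definition RepVtx := ({set mors} + {set mors})%type.

Definition RepV (F F1 F2 : fmor) (Q S S' : {group gT}) : {set RepVtx} :=
  [set (inl (rep_cls F Q S F1 phi) : RepVtx) | phi in Hom_set F Q S] :|: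
  [set (inr (rep_cls F Q S' F2 phi) : RepVtx) | phi in Hom_set F Q S'].

Definition RepE (F Fe : fmor) (Q S' : {group gT}) : {set {set mors}} :=
  [set rep_cls F Q S' Fe phi | phi in Hom_set F Q S'].

Definition rep_of (e : {set mors}) : mors := odflt [ffun x => x] [pick phi in e].

(* the edge [phi]_Fe joins [phi]_F2 and [iota phi]_F1 *)
Definition RepEnd2 (F F2 : fmor) (Q S' : {group gT}) (e : {set mors}) : RepVtx :=
  inr (rep_cls F Q S' F2 (rep_of e)).
Definition RepEnd1 (F F1 : fmor) (Q S : {group gT}) (e : {set mors}) : RepVtx :=
  inl (rep_cls F Q S F1 (rep_of e)).

End Fusion.

Section Graphs.
Variables (V E : finType) (Vs : {set V}) (Es : {set E}) (end1 end2 : E -> V).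

Definition joins (e : E) (u v : V) :=
  ((end1 e == u) && (end2 e == v)) || ((end1 e == v) && (end2 e == u)).

Definition adj : rel V := fun u v => [exists e in Es, joins e u v].

Definition has_cycle :=
  exists n (v : 'I_n -> V) (e : 'I_n -> E),
    [/\ 0 < n, injective v, injective e &
        forall i, e i \in Es /\ joins (e i) (v i) (v (ordS i))].

Definition is_tree :=
  [/\ Vs != set0, {in Vs &, forall u v, connect adj u v} & ~ has_cycle].

(* H_1(graph; R) = 0 : the boundary map R[Es] -> R[Vs] is injective *)
Definition H1_zero (R : comPzRingType) :=
  forall c : E -> R,
    (forall v, v \in Vs ->
       (\sum_(e in Es | end1 e == v) c e - \sum_(e in Es | end2 e == v) c e
        = 0)%R) ->
    forall e, e \in Es -> c e = 0%R.

End Graphs.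

(* Call an edge [phi] of Rep_F(Q, Lambda) marked when phi(Q) = P.  As F is
   generated by H and Aut_F(P), an F-morphism whose source is not F-conjugate
   into P is an H-morphism, and being H-conjugate to P is invariant under
   F-morphisms.  Hence an unmarked edge is the only edge at its N_F(P)-vertex
   (an N_F(P)-map between the two representatives extends to phi(Q)P, which is
   not conjugate into P, so it lies in N_H(P)), and two marked edges never
   share their H-vertex (an H-isomorphism between two maps onto P lies in
   N_H(P)).  A bipartite graph with these two properties has no cycle and no
   nonzero 1-cycle.  It is connected: if Q is F-conjugate to P, every vertex
   is joined to the N_F(P)-class of the maps onto P; otherwise all F-maps out
   of Q are H-maps, and every vertex is joined to the H-class of the identity. *)

From HB Require Import structures.
From mathcomp Require Import all_boot all_order all_algebra all_fingroup all_solvable.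
From Stdlib Require Import Classical ClassicalEpsilon.

Set Implicit Arguments.
Unset Strict Implicit.
Unset Printing Implicit Defensive.

Import GRing.Theory.

Local Open Scope group_scope.

Lemma asbP (P : Prop) : asb P <-> P.
Proof. by rewrite /asb; case: excluded_middle_informative. Qed.

Section Images.
Variable gT : finGroupType.
Implicit Types (A B : {group gT}) (f g : gT -> gT).

Lemma morph1_in A f : {in A &, {morph f : x y / x * y}} -> f 1 = 1.
Proof.
move=> fM; apply: (mulgI (f 1)).
by rewrite mulg1 -fM ?group1 // mulg1.
Qed.

Lemma img_morph A f :
  {in A &, {morph f : x y / x * y}} -> (img f A : {set gT}) = f @: A.
Proof.
move=> fM; apply: gen_set_id; apply/group_setP; split.
  by rewrite -(morph1_in fM); apply: imset_f.
move=> _ _ /imsetP[x xA ->] /imsetP[y yA ->].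
by rewrite -fM // imset_f ?groupM.
Qed.

Lemma mem_img A f x : x \in A -> f x \in img f A.
Proof. by move=> xA; apply/mem_gen/imset_f. Qed.

Lemma imset_sub_img A f : f @: A \subset img f A.
Proof. exact: subset_gen. Qed.

Lemma img_subG A B f : f @: A \subset B -> img f A \subset B.
Proof. by rewrite gen_subG. Qed.

Lemma imgS A B f : A \subset B -> img f A \subset img f B.
Proof. by move=> sAB; rewrite genS ?imsetS. Qed.

Lemma eq_in_img A f g : {in A, f =1 g} -> img f A = img g A.
Proof. by move=> fg; apply: val_inj; rewrite /= (eq_in_imset fg). Qed.

Lemma img_ffun A f : img [ffun x => f x] A = img f A.
Proof. by apply: eq_in_img => x _; rewrite ffunE. Qed.

Lemma img_id A : img id A = A.
Proof. by apply: val_inj; rewrite /= imset_id genGid. Qed.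

Lemma img_comp A f g :
  {in A &, {morph f : x y / x * y}} -> img g (img f A) = img (g \o f) A.
Proof. by move=> fM; apply: val_inj; rewrite /= (img_morph fM) -imset_comp. Qed.

Lemma img_cancel A f g :
  {in A &, {morph f : x y / x * y}} -> {in A, cancel f g} -> img g (img f A) = A.
Proof.
by move=> fM fK; rewrite img_comp // -[RHS]img_id; apply: eq_in_img => x /fK.
Qed.

Lemma card_img A B f : inj_hom A B f -> #|img f A| = #|A|.
Proof. by case=> fM fI _; rewrite img_morph // (card_in_imset fI). Qed.

Lemma img_sub A B f : inj_hom A B f -> img f A \subset B.
Proof. by case=> _ _; apply: img_subG. Qed.

End Images.

Section FusionSystemFacts.
Variables (gT : finGroupType) (S : {group gT}) (F : fmor gT).
Hypothesis fsF : fusion_system S F.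

Lemma fs_incl (A B : {group gT}) : A \subset B -> B \subset S -> F A B id.
Proof.
move=> sAB sBS; have sAS := subset_trans sAB sBS.
have := fs_conj fsF sAS sBS (group1 S); rewrite conjsg1 => /(_ sAB) F1.
by apply: (fs_ext fsF F1) => x _; rewrite /conj_mor conjg1.
Qed.

Lemma fs_restr (A B A' B' : {group gT}) f :
  F A B f -> A' \subset A -> B' \subset S -> f @: A' \subset B' -> F A' B' f.
Proof.
move=> Ff sA'A sB'S sfA'.
have [sAS _] := fs_sub fsF Ff.
have FfA' : F A' B f := fs_comp fsF (fs_incl sA'A sAS) Ff.
have := fs_comp fsF (fs_img fsF FfA') (fs_incl (img_subG sfA') sB'S).
by move/(fs_ext fsF); apply.
Qed.

Lemma fs_widen (A B : {group gT}) f : F A B f -> F A S f.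
Proof.
move=> Ff; have [_ sBS] := fs_sub fsF Ff; have [_ _ sfA] := fs_hom fsF Ff.
exact: fs_restr Ff (subxx A) (subxx S) (subset_trans sfA sBS).
Qed.

Lemma fs_ffun (A B : {group gT}) f : F A B f -> F A B [ffun x => f x].
Proof. by move/(fs_ext fsF); apply=> x _; rewrite ffunE. Qed.

End FusionSystemFacts.

Definition img_invariant (gT : finGroupType) (Pr : {group gT} -> Prop) (f : gT -> gT)
    (A : {group gT}) :=
  forall A' : {group gT}, A' \subset A -> Pr A' <-> Pr (img f A').

Lemma fs_img_invariant (gT : finGroupType) (S : {group gT}) (F : fmor gT)
    (Pr : {group gT} -> Prop) :
  fusion_system S F ->
  (forall (A B : {group gT}) s, A \subset S -> B \subset S -> s \in S ->
     A :^ s \subset B -> img_invariant Pr (conj_mor s) A) ->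
  fusion_system S (fun A B f => F A B f /\ img_invariant Pr f A).
Proof.
move=> fsF Pr_conj; split.
- by move=> A B f [/(fs_sub fsF)].
- by move=> A B f [/(fs_hom fsF)].
- move=> A B f f' [Ff Prf] ff'; split; first exact (fs_ext fsF Ff ff').
  move=> A' sA'A; rewrite -(@eq_in_img _ _ f); first exact: Prf.
  by move=> x /(subsetP sA'A) /ff'.
- move=> A B s sAS sBS sS sAsB; split; first exact (fs_conj fsF sAS sBS sS sAsB).
  exact (Pr_conj A B s sAS sBS sS sAsB).
- move=> A B C f g [Ff Prf] [Fg Prg]; split; first exact (fs_comp fsF Ff Fg).
  move=> A' sA'A; have [fM _ sfAB] := fs_hom fsF Ff.
  rewrite -img_comp; last by apply: sub_in2 fM; apply/subsetP.
  rewrite (Prf _ sA'A); apply: Prg.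
  exact: subset_trans (imgS f sA'A) (img_subG sfAB).
- by move=> A B f [Ff Prf]; split=> //; exact (fs_img fsF Ff).
- move=> A B f [Ff Prf]; have [g [Fg fK]] := fs_inv fsF Ff.
  exists g; split=> //; split=> // A' sA'I.
  have [fM _ _] := fs_hom fsF Ff; have [gM _ sgA] := fs_hom fsF Fg.
  have sgA'A : img g A' \subset A := subset_trans (imgS g sA'I) (img_subG sgA).
  have gK : {in img f A, cancel g f}.
    by move=> y; rewrite img_morph // => /imsetP[x xA ->]; rewrite fK.
  have fgA' : img f (img g A') = A'.
    by rewrite img_cancel //; [apply: sub_in2 gM | apply: sub_in1 gK]; apply/subsetP.
  by have := Prf _ sgA'A; rewrite fgA' => ?; apply: iff_sym.
Qed.

Definition conj_into (gT : finGroupType) (S : {group gT}) (E : fmor gT) (A P : {group gT}) :=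
  exists2 k, E A S k & img k A \subset P.

Definition conj_to (gT : finGroupType) (S : {group gT}) (E : fmor gT) (A P : {group gT}) :=
  exists2 h, E A S h & img h A = P.

Section Conjugates.
Variables (gT : finGroupType) (S : {group gT}) (E : fmor gT).
Hypothesis fsE : fusion_system S E.
Implicit Types (A B P : {group gT}) (f : gT -> gT).

Lemma conj_into_comp A B P f : E A B f -> conj_into S E B P -> conj_into S E A P.
Proof.
move=> Ef [k Ek kBP]; exists (k \o f); first exact (fs_comp fsE Ef Ek).
have [fM _ sfAB] := fs_hom fsE Ef.
by rewrite -img_comp // (subset_trans _ kBP) // imgS // img_subG.
Qed.

Lemma conj_to_img A B P f : E A B f -> conj_to S E A P -> conj_to S E (img f A) P.
Proof.
move=> Ef [h Eh hAP]; have [g [Eg fK]] := fs_inv fsE Ef.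
exists (h \o g); first exact (fs_comp fsE Eg Eh).
have [fM _ _] := fs_hom fsE Ef; have [gM _ _] := fs_hom fsE Eg.
by rewrite -img_comp // (img_cancel fM fK).
Qed.

Lemma conj_to_imgE A B A' P f :
  E A B f -> A' \subset A -> conj_to S E A' P <-> conj_to S E (img f A') P.
Proof.
move=> Ef sA'A; have [_ sBS] := fs_sub fsE Ef; have [fM _ sfAB] := fs_hom fsE Ef.
have sfA'S : f @: A' \subset S by rewrite (subset_trans (imsetS f sA'A)) ?(subset_trans sfAB).
have EfA' : E A' S f := fs_restr fsE Ef sA'A (subxx S) sfA'S.
split; first exact: conj_to_img EfA'.
have [g [Eg fK]] := fs_inv fsE EfA'.
by move/(conj_to_img Eg); rewrite img_cancel //; apply: sub_in2 fM; apply/subsetP.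
Qed.

Lemma card_conj_to A P : conj_to S E A P -> #|A| = #|P|.
Proof. by case=> h Eh <-; rewrite (card_img (fs_hom fsE Eh)). Qed.

Lemma conj_into_join A P : conj_into S E (A <*> P)%G P -> A \subset P.
Proof.
case=> k Ek kP; have cardJ : #|A <*> P| <= #|P|.
  by rewrite -(card_img (fs_hom fsE Ek)) subset_leq_card.
have /eqP eJ : P == A <*> P :> {set gT} by rewrite eqEcard joing_subr.
by rewrite eJ joing_subl.
Qed.

End Conjugates.

Lemma generated_sub (gT : finGroupType) (S : {group gT}) (X F E : fmor gT) :
  generated_by S X F -> fusion_system S E -> subsystem X E -> subsystem F E.
Proof. by move=> genF fsE sXE A B f /genF; apply. Qed.

Section GeneratedByHAndAutP.
Variables (gT : finGroupType) (S P : {group gT}) (F H : fmor gT).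
Hypotheses (fsF : fusion_system S F) (fsH : fusion_system S H).
Hypotheses (sHF : subsystem H F) (sPS : P \subset S).
Hypothesis genF :
  generated_by S (fun A B f => H A B f \/ [/\ A = P, B = P & F P P f]) F.

Lemma H_of_not_conj_into (A B : {group gT}) f :
  F A B f -> ~ conj_into S F A P -> H A B f.
Proof.
move=> Ff; pose E A B f := F A B f /\ (~ conj_into S F A P -> H A B f).
suff /(_ A B f Ff) [] : subsystem F E by [].
apply: (generated_sub genF); last first.
  move=> A0 B0 f0 [Hf0 | [-> -> Ff0]]; first by split=> //; apply: sHF.
  split=> // notPP; case: notPP; exists id; first exact (fs_incl fsF sPS (subxx S)).
  by rewrite img_id.
split.
- by move=> A0 B0 f0 [/(fs_sub fsF)].
- by move=> A0 B0 f0 [/(fs_hom fsF)].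
- move=> A0 B0 f0 f1 [Ff0 Hf0] f01; split; first exact (fs_ext fsF Ff0 f01).
  by move/Hf0/(fs_ext fsH); apply.
- move=> A0 B0 s sA0S sB0S sS sA0B0.
  by split=> [|_]; [apply: (fs_conj fsF) | apply: (fs_conj fsH)].
- move=> A0 B0 C0 f0 g0 [Ff0 Hf0] [Fg0 Hg0]; split; first exact (fs_comp fsF Ff0 Fg0).
  move=> notA0; have notB0 : ~ conj_into S F B0 P by move/(conj_into_comp fsF Ff0).
  exact (fs_comp fsH (Hf0 notA0) (Hg0 notB0)).
- move=> A0 B0 f0 [Ff0 Hf0].
  by split=> [|/Hf0 Hf0']; [exact (fs_img fsF Ff0) | exact (fs_img fsH Hf0')].
- move=> A0 B0 f0 [Ff0 Hf0]; case: (classic (conj_into S F A0 P)) => [A0P | notA0].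
    have [g [Fg fK]] := fs_inv fsF Ff0; exists g; split=> //; split=> // notIP.
    by case: notIP; exact (conj_into_comp fsF Fg A0P).
  have [g [Hg fK]] := fs_inv fsH (Hf0 notA0).
  by exists g; split=> //; split=> //; apply: sHF.
Qed.

Lemma conj_to_img_AutF (A : {group gT}) f : F P P f -> A \subset P ->
  conj_to S H A P <-> conj_to S H (img f A) P.
Proof.
move=> Ff sAP; have homf := fs_hom fsF Ff; have [_ _ sfP] := homf.
have FfA : F A P f := fs_restr fsF Ff sAP sPS (subset_trans (imsetS f sAP) sfP).
have fP : img f P = P.
  by apply/val_inj/eqP; rewrite eqEcard (img_sub homf) (card_img homf) /=.
suff AP : conj_to S H A P \/ conj_to S H (img f A) P -> A = P.
  by split=> c; (suff eA : A = P by move: c; rewrite eA fP); apply: AP; [left | right].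
move=> cA; apply/val_inj/eqP; rewrite eqEcard sAP /=.
by case: cA => /(card_conj_to fsH); rewrite ?(card_img (fs_hom fsF FfA)) => ->.
Qed.

Lemma conj_to_img_gen (A B A' : {group gT}) f : F A B f -> A' \subset A ->
  conj_to S H A' P <-> conj_to S H (img f A') P.
Proof.
move=> Ff; pose Pr A := conj_to S H A P.
suff /(_ A B f Ff) [_] : subsystem F (fun A B f => F A B f /\ img_invariant Pr f A).
  by apply.
apply: (generated_sub genF).
  apply: fs_img_invariant fsF _ => A0 B0 s sA0S sB0S sS sA0B0 A1.
  exact (conj_to_imgE fsH P (fs_conj fsH sA0S sB0S sS sA0B0)).
move=> A0 B0 f0 [Hf0 | [-> -> Ff0]].
  by split=> [|A1]; [exact (sHF Hf0) | exact (conj_to_imgE fsH P Hf0)].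
by split=> // A1; apply: conj_to_img_AutF.
Qed.

Lemma NF_H_of_not_conj_into (A B : {group gT}) f :
  NF S F P A B f -> ~ conj_into S F (A <*> P)%G P -> NF S H P A B f.
Proof.
move=> [sAN sBN Ff [fh [Ffh fhf fhP]]] notJP; have Hfh := H_of_not_conj_into Ffh notJP.
split=> //; last by exists fh.
have [_ sBS] := fs_sub fsF Ff; have [_ _ sfAB] := fs_hom fsF Ff.
have sfhAB : fh @: A \subset B by rewrite (eq_in_imset fhf).
exact (fs_ext fsH (fs_restr fsH Hfh (joing_subl A P) sBS sfhAB) fhf).
Qed.

End GeneratedByHAndAutP.

(* The fusion-system axioms needed for [rep_cls] to be an equivalence class;
   unlike [fusion_system], they are easy to check for [NF]. *)
Record groupoid_on (gT : finGroupType) (E : fmor gT) (T : {group gT}) : Prop := {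
  gpd_id : forall A : {group gT}, A \subset T -> E A A id;
  gpd_comp : forall (A B C : {group gT}) f g, E A B f -> E B C g -> E A C (g \o f);
  gpd_inv : forall (A B : {group gT}) f, E A B f -> f @: A = B ->
     exists g, [/\ E B A g, g @: B = A & {in A, cancel f g}]
}.

Lemma fs_groupoid (gT : finGroupType) (S : {group gT}) (E : fmor gT) :
  fusion_system S E -> groupoid_on E S.
Proof.
move=> fsE; split.
- by move=> A sAS; exact (fs_incl fsE (subxx A) sAS).
- by move=> A B C f g Ef Eg; exact (fs_comp fsE Ef Eg).
- move=> A B f Ef fAB; have [g [Eg fK]] := fs_inv fsE Ef.
  have [fM _ _] := fs_hom fsE Ef.
  have imgfA : img f A = B by apply: val_inj; rewrite /= img_morph.
  exists g; split=> //; first by rewrite -imgfA.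
  by rewrite -fAB -imset_comp -[RHS]imset_id; apply: eq_in_imset => x /fK.
Qed.

Section NormalizerSystem.
Variables (gT : finGroupType) (S P : {group gT}) (E : fmor gT).
Hypotheses (fsE : fusion_system S E) (sPS : P \subset S).

Lemma NF_inv (A B : {group gT}) f : NF S E P A B f -> f @: A = B ->
  exists g, [/\ NF S E P B A g, g @: B = A & {in A, cancel f g}].
Proof.
move=> [sAN sBN Ef [fh [Efh fhf fhP]]] fAB.
have [g [Eg fhK]] := fs_inv fsE Efh; have [_ _ sgJ] := fs_hom fsE Eg.
have [sAS _] := fs_sub fsE Ef; have JS : A <*> P \subset S by rewrite join_subG sAS.
have fhA : fh @: A = B by rewrite -fAB; apply: eq_in_imset.
have gK (X : {set gT}) : X \subset A <*> P -> g @: (fh @: X) = X.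
  move=> sXJ; rewrite -imset_comp -[RHS]imset_id.
  by apply: eq_in_imset => x /(subsetP sXJ) /fhK.
have sBPI : B <*> P \subset img fh (A <*> P).
  rewrite join_subG -{1}fhA -{2}fhP.
  by rewrite !(subset_trans _ (imset_sub_img _ _)) // imsetS ?joing_subl ?joing_subr.
have sgBP : g @: (B <*> P) \subset A <*> P := subset_trans (imsetS g sBPI) sgJ.
have gB : g @: B = A by rewrite -fhA gK ?joing_subl.
exists g; split=> //; last by move=> x xA; rewrite -fhf // fhK // (subsetP (joing_subl A P)).
split=> //.
  by apply: (fs_restr fsE Eg (subset_trans (joing_subl B P) sBPI) sAS); rewrite gB.
exists g; split=> //; first exact (fs_restr fsE Eg sBPI JS sgBP).
by rewrite -{1}fhP gK ?joing_subr.
Qed.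

Lemma NF_groupoid : groupoid_on (NF S E P) 'N_S(P)%G.
Proof.
have sNS : 'N_S(P) \subset S by apply: subsetIl.
split; last exact: NF_inv.
- move=> A sAN; have sAS := subset_trans sAN sNS.
  split=> //; first exact (fs_incl fsE (subxx A) sAS).
  exists id; split=> //; last exact: imset_id.
  by apply: (fs_incl fsE (subxx _)); rewrite join_subG sAS.
- move=> A B C f g [sAN _ Ef [fh [Efh fhf fhP]]] [_ sCN Eg [gh [Egh ghg ghP]]].
  split=> //; first exact (fs_comp fsE Ef Eg).
  exists (gh \o fh); split; first exact (fs_comp fsE Efh Egh).
    have [_ _ sfAB] := fs_hom fsE Ef.
    by move=> x xA /=; rewrite fhf // ghg // (subsetP sfAB) ?imset_f.
  by rewrite imset_comp fhP ghP.
Qed.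

End NormalizerSystem.

Lemma NF_sub (gT : finGroupType) (S P : {group gT}) (E E' : fmor gT) :
  subsystem E E' -> subsystem (NF S E P) (NF S E' P).
Proof.
move=> sEE' A B f [sAN sBN Ef [fh [Efh fhf fhP]]].
by split=> //; [apply: sEE' | exists fh; split=> //; apply: sEE'].
Qed.

Definition rep_rel (gT : finGroupType) (F : fmor gT) (Q T : {group gT}) (E : fmor gT)
    (phi psi : gT -> gT) :=
  F Q T psi /\ exists theta, [/\ E (img phi Q) (img psi Q) theta,
    theta @: img phi Q = img psi Q & {in Q, forall x, theta (phi x) = psi x}].

Section RepClasses.
Variables (gT : finGroupType) (S : {group gT}) (F : fmor gT).
Hypothesis fsF : fusion_system S F.
Variables (Q T : {group gT}) (E : fmor gT).
Implicit Types phi psi chi : mors gT.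

Lemma rep_clsP phi psi : reflect (rep_rel F Q T E phi psi) (psi \in rep_cls F Q T E phi).
Proof. by rewrite inE; apply: (iffP idP) => /asbP. Qed.

Hypothesis gpdE : groupoid_on E T.

Lemma rep_rel_refl (phi : gT -> gT) : F Q T phi -> rep_rel F Q T E phi phi.
Proof.
move=> Fphi; split=> //; exists id; split=> //; last exact: imset_id.
exact (gpd_id gpdE (img_sub (fs_hom fsF Fphi))).
Qed.

Lemma rep_rel_trans (phi psi chi : gT -> gT) :
  rep_rel F Q T E phi psi -> rep_rel F Q T E psi chi -> rep_rel F Q T E phi chi.
Proof.
move=> [_ [t1 [Et1 t1Q t1phi]]] [Fchi [t2 [Et2 t2Q t2psi]]]; split=> //.
exists (t2 \o t1); split; first exact (gpd_comp gpdE Et1 Et2).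
  by rewrite imset_comp t1Q.
by move=> x xQ /=; rewrite t1phi // t2psi.
Qed.

Lemma rep_rel_sym (phi psi : gT -> gT) :
  F Q T phi -> rep_rel F Q T E phi psi -> rep_rel F Q T E psi phi.
Proof.
move=> Fphi [_ [t [Et tQ tphi]]]; split=> //.
have [g [Eg gQ tK]] := gpd_inv gpdE Et tQ.
by exists g; split=> // x xQ; rewrite -tphi // tK // mem_img.
Qed.

Lemma rep_cls_eq phi psi :
  F Q T phi -> rep_rel F Q T E phi psi -> rep_cls F Q T E phi = rep_cls F Q T E psi.
Proof.
move=> Fphi phi_psi; apply/setP => chi; apply/rep_clsP/rep_clsP.
  exact/rep_rel_trans/(rep_rel_sym Fphi).
exact: rep_rel_trans.
Qed.

Lemma rep_cls_eqP phi psi : F Q T psi ->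
  rep_cls F Q T E phi = rep_cls F Q T E psi -> rep_rel F Q T E phi psi.
Proof. by move=> Fpsi phi_psi; apply/rep_clsP; rewrite phi_psi; apply/rep_clsP/rep_rel_refl. Qed.

Lemma rep_ofP e : e \in RepE F E Q T ->
  F Q T (rep_of e) /\ e = rep_cls F Q T E (rep_of e).
Proof.
case/imsetP=> phi; rewrite inE => /asbP Fphi ->.
have: phi \in rep_cls F Q T E phi by apply/rep_clsP/rep_rel_refl.
rewrite /rep_of; case: pickP => [psi /rep_clsP phi_psi _ | /(_ phi) -> //].
by split; [case: phi_psi | apply: rep_cls_eq].
Qed.

End RepClasses.

Section RepRelations.
Variables (gT : finGroupType) (S : {group gT}) (F : fmor gT).
Hypothesis fsF : fusion_system S F.
Variables (Q T : {group gT}).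

Lemma rep_rel_sub (E E' : fmor gT) phi psi : subsystem E E' ->
  rep_rel F Q T E phi psi -> rep_rel F Q T E' phi psi.
Proof. by move=> sEE' [Fpsi [t [Et tQ tphi]]]; split=> //; exists t; split=> //; apply: sEE'. Qed.

Lemma rep_rel_widen (E : fmor gT) phi psi :
  rep_rel F Q T E phi psi -> rep_rel F Q S E phi psi.
Proof. by case=> Fpsi t; split=> //; exact (fs_widen fsF Fpsi). Qed.

Lemma rep_rel_img_eq phi psi : F Q T phi -> F Q T psi -> img phi Q = img psi Q ->
  rep_rel F Q T F phi psi.
Proof.
move=> Fphi Fpsi phi_psi; split=> //.
have [g [Fg phiK]] := fs_inv fsF Fphi.
have [phiM _ _] := fs_hom fsF Fphi; have [psiM _ _] := fs_hom fsF Fpsi.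
exists (psi \o g); split.
- exact (fs_comp fsF Fg (fs_img fsF Fpsi)).
- rewrite (img_morph phiM) (img_morph psiM) -imset_comp.
  by apply: eq_in_imset => x /phiK /= ->.
- by move=> x /phiK /= ->.
Qed.

Variables (E : fmor gT) (P : {group gT}).
Hypothesis sPS : P \subset S.

Lemma rep_rel_NF_onto phi psi : rep_rel F Q T E phi psi -> F Q 'N_S(P) psi ->
  img phi Q = P -> img psi Q = P -> rep_rel F Q 'N_S(P)%G (NF S E P) phi psi.
Proof.
move=> [_ [t [Et tQ tphi]]] FpsiN phiP psiP; split=> //; exists t.
rewrite phiP psiP in Et tQ *; split=> //.
have sPN : P \subset 'N_S(P) by rewrite subsetI sPS normG.
split=> //; exists t; split=> //.
by have -> : (P <*> P)%G = P by apply/val_inj/joing_idPl.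
Qed.

End RepRelations.

Section MarkedBipartiteGraphs.
Variables (V E : finType) (Vs : {set V}) (Es : {set E}) (end1 end2 : E -> V).
Variable marked : pred E.
Hypothesis ends_sep : forall e e', end1 e != end2 e'.
Hypothesis unmarked_end1_inj :
  {in Es &, forall e e', ~~ marked e -> end1 e = end1 e' -> e = e'}.
Hypothesis marked_end2_inj :
  {in Es &, forall e e', marked e -> marked e' -> end2 e = end2 e' -> e = e'}.

Lemma marked_acyclic : ~ has_cycle Es end1 end2.
Proof.
(* The cycle crosses its edges alternately from end1 to end2 and back, so
   some e_i, e_(i+1) share their end1 (both are then marked) while
   e_(i+1), e_(i+2) share their end2. *)
case=> n [v [e [n_gt0 _ e_inj cyc]]].
pose up i := end1 (e i) == v i.
have endsE i : if up i then end2 (e i) = v (ordS i)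
               else end1 (e i) = v (ordS i) /\ end2 (e i) = v i.
  rewrite /up; have [_] := cyc i.
  case/orP=> /andP[/eqP e1 /eqP e2]; rewrite e1 ?eqxx //.
  case: eqP => // vSi.
  by move: (ends_sep (e i) (e i)); rewrite e1 e2 vSi eqxx.
have upS i : up (ordS i) = ~~ up i.
  have := endsE i; have := endsE (ordS i); rewrite /up.
  case: eqP => [e1Si | _] hSi; case: eqP => [e1i | _] hi //.
  - by move: (ends_sep (e (ordS i)) (e i)); rewrite e1Si hi eqxx.
  - by move: (ends_sep (e i) (e (ordS i))); rewrite hi.1 hSi.2 eqxx.
have e_neq i : e (ordS i) != e i.
  by apply/negP => /eqP /e_inj eSi; move: (upS i); rewrite eSi; case: (up i).
have marked_down i : ~~ up i -> marked (e i) /\ marked (e (ordS i)).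
  move=> ni; have := endsE i; rewrite (negbTE ni) => -[e1i _].
  have /eqP e1Si : up (ordS i) by rewrite upS.
  have e11 : end1 (e i) = end1 (e (ordS i)) by rewrite e1i e1Si.
  have [ei _] := cyc i; have [eSi _] := cyc (ordS i).
  split; apply/negPn/negP => nm; case/eqP: (e_neq i).
    exact/esym/unmarked_end1_inj.
  exact/unmarked_end1_inj.
have [i ni] : exists i, ~~ up i.
  pose i0 := Ordinal n_gt0; case: (boolP (up i0)) => u0; last by exists i0.
  by exists (ordS i0); rewrite upS u0.
have uSi : up (ordS i) by rewrite upS.
have nSSi : ~~ up (ordS (ordS i)) by rewrite upS uSi.
have [_ mSi] := marked_down i ni; have [mSSi _] := marked_down _ nSSi.
have := endsE (ordS i); have := endsE (ordS (ordS i)).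
rewrite uSi (negbTE nSSi) => -[_ e2SSi] e2Si.
have [eSi _] := cyc (ordS i); have [eSSi _] := cyc (ordS (ordS i)).
case/eqP: (e_neq (ordS i)); apply: marked_end2_inj => //.
by rewrite e2Si e2SSi.
Qed.

Local Open Scope ring_scope.

Lemma marked_H1_zero (R : comPzRingType) :
  (forall e, e \in Es -> end1 e \in Vs /\ end2 e \in Vs) -> H1_zero Vs Es end1 end2 R.
Proof.
move=> endsVs c cycle_c.
have c_unmarked e : e \in Es -> ~~ marked e -> c e = 0.
  move=> eE nme; have := cycle_c _ (endsVs e eE).1.
  rewrite (bigD1 e) ?eE ?eqxx //= big1 => [|e' /andP[/andP[e'E /eqP ee'] ne'e]].
    rewrite big1 => [|e' /andP[_ /eqP e'e]]; first by rewrite addr0 subr0.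
    by move: (ends_sep e e'); rewrite e'e eqxx.
  by case/eqP: ne'e; apply/esym/unmarked_end1_inj.
move=> e eE; case: (boolP (marked e)) => [me|]; last exact: c_unmarked.
have := cycle_c _ (endsVs e eE).2.
rewrite big1 => [|e' /andP[_ /eqP e'e]]; last first.
  by move: (ends_sep e' e); rewrite e'e eqxx.
rewrite (bigD1 e) ?eE ?eqxx //= big1 => [|e' /andP[/andP[e'E /eqP e'e] ne'e]].
  by rewrite addr0 sub0r => /eqP; rewrite oppr_eq0 => /eqP.
have [me'|] := boolP (marked e'); last exact: c_unmarked.
by case/eqP: ne'e; apply: marked_end2_inj.
Qed.

End MarkedBipartiteGraphs.

Lemma connect_adj_sym (V E : finType) (Es : {set E}) (end1 end2 : E -> V) :
  connect_sym (adj Es end1 end2).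
Proof.
apply: sym_connect_sym => u v; apply/existsP/existsP => -[e /andP[eE uv]];
  by exists e; rewrite eE /joins orbC.
Qed.

Lemma connect_adj_hub (V E : finType) (Vs : {set V}) (Es : {set E}) (end1 end2 : E -> V) w :
  (forall u, u \in Vs -> connect (adj Es end1 end2) u w) ->
  {in Vs &, forall u v, connect (adj Es end1 end2) u v}.
Proof.
move=> to_w u v uV vV; apply: connect_trans (to_w u uV) _.
by rewrite connect_adj_sym; apply: to_w.
Qed.

Section RepGraph.
Variables (gT : finGroupType) (S P : {group gT}) (F H : fmor gT).
Hypotheses (fsF : fusion_system S F) (fsH : fusion_system S H).
Hypotheses (sHF : subsystem H F) (sPS : P \subset S).
Hypothesis genF :
  generated_by S (fun A B f => H A B f \/ [/\ A = P, B = P & F P P f]) F.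
Variable Q : {group gT}.
Hypothesis sQS : Q \subset S.

Local Notation N := 'N_S(P)%G.
Local Notation Vs := (RepV F H (NF S F P) Q S N).
Local Notation Es := (RepE F (NF S H P) Q N).
Local Notation end1 := (RepEnd2 F (NF S F P) Q N).
Local Notation end2 := (RepEnd1 F H Q S).
Local Notation adjQ := (adj Es end1 end2).

Let sNS : N \subset S := subsetIl S _.
Let sPN : P \subset N. Proof. by rewrite subsetI sPS normG. Qed.
Let gpdH := fs_groupoid fsH.
Let gpdF2 := NF_groupoid fsF sPS.
Let gpdFe := NF_groupoid fsH sPS.

Lemma rep_edge_in (phi : mors gT) : F Q N phi -> rep_cls F Q N (NF S H P) phi \in Es.
Proof. by move=> Fphi; apply/imsetP; exists phi; rewrite // inE; apply/asbP. Qed.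

Lemma rep_edge_ends (phi : mors gT) : F Q N phi ->
  end1 (rep_cls F Q N (NF S H P) phi) = inr (rep_cls F Q N (NF S F P) phi) /\
  end2 (rep_cls F Q N (NF S H P) phi) = inl (rep_cls F Q S H phi).
Proof.
move=> Fphi; set e := rep_cls _ _ _ _ phi.
have [Frep e_rep] := rep_ofP fsF gpdFe (rep_edge_in Fphi).
have phi_rep := rep_cls_eqP fsF gpdFe Frep e_rep.
rewrite /RepEnd2 /RepEnd1; split; congr (_ _); apply/esym.
  exact (rep_cls_eq gpdF2 Fphi (rep_rel_sub (NF_sub sHF) phi_rep)).
apply: (rep_cls_eq gpdH (fs_widen fsF Fphi)); apply: (rep_rel_widen fsF).
by apply: rep_rel_sub phi_rep => A B f [].
Qed.

Lemma rep_edge_ends_in e : e \in Es -> end1 e \in Vs /\ end2 e \in Vs.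
Proof.
move=> eE; have [Frep _] := rep_ofP fsF gpdFe eE.
rewrite !inE; split; apply/orP; [right | left]; apply: imset_f; rewrite inE; apply/asbP.
  exact: Frep.
exact (fs_widen fsF Frep).
Qed.

Lemma rep_ends_sep e e' : end1 e != end2 e'.
Proof. by []. Qed.

Hypothesis notP : ~ (exists f, F Q S f /\ img f Q \proper P).

Let marked e := img (rep_of e) Q == P.

Lemma unmarked_rep_end1_inj :
  {in Es &, forall e e', ~~ marked e -> end1 e = end1 e' -> e = e'}.
Proof.
move=> e e' eE e'E unmarked_e [e_e'].
have [Frep e_rep] := rep_ofP fsF gpdFe eE; have [Frep' e'_rep] := rep_ofP fsF gpdFe e'E.
have [_ [t [F2t tQ trep]]] := rep_cls_eqP fsF gpdF2 Frep' e_e'.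
suff Fet : NF S H P (img (rep_of e) Q) (img (rep_of e') Q) t.
  by rewrite e_rep e'_rep; apply: (rep_cls_eq gpdFe Frep); split=> //; exists t.
apply: (NF_H_of_not_conj_into fsF fsH sHF sPS genF F2t) => /(conj_into_join fsF) sIP.
apply: notP; exists (rep_of e); split; first exact (fs_widen fsF Frep).
by rewrite properEneq sIP andbT.
Qed.

Lemma marked_rep_end2_inj :
  {in Es &, forall e e', marked e -> marked e' -> end2 e = end2 e' -> e = e'}.
Proof.
move=> e e' eE e'E /eqP eP /eqP e'P [e_e'].
have [Frep e_rep] := rep_ofP fsF gpdFe eE; have [Frep' e'_rep] := rep_ofP fsF gpdFe e'E.
have Hrel := rep_cls_eqP fsF gpdH (fs_widen fsF Frep') e_e'.
rewrite e_rep e'_rep; apply: (rep_cls_eq gpdFe Frep).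
exact (rep_rel_NF_onto sPS Hrel Frep' eP e'P).
Qed.

Lemma rep_vertexP u : u \in Vs ->
  (exists2 phi : mors gT, F Q S phi & u = inl (rep_cls F Q S H phi)) \/
  (exists2 phi : mors gT, F Q N phi & u = inr (rep_cls F Q N (NF S F P) phi)).
Proof.
by rewrite inE => /orP[] /imsetP[phi]; rewrite inE => /asbP Fphi ->; [left | right]; exists phi.
Qed.

Lemma adj_rep_edge (phi : mors gT) : F Q N phi ->
  adjQ (inr (rep_cls F Q N (NF S F P) phi)) (inl (rep_cls F Q S H phi)).
Proof.
move=> Fphi; have [e1 e2] := rep_edge_ends Fphi.
apply/existsP; exists (rep_cls F Q N (NF S H P) phi).
by rewrite rep_edge_in // /joins e1 e2 !eqxx.
Qed.

Lemma rep_cls_H_id (phi : mors gT) : ~ conj_into S F Q P -> F Q S phi ->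
  rep_cls F Q S H phi = rep_cls F Q S H [ffun x => x].
Proof.
move=> notQP Fphi; have Hphi := H_of_not_conj_into fsF fsH sHF sPS genF Fphi notQP.
apply/esym/(rep_cls_eq gpdH (fs_ffun fsF (fs_incl fsF sQS (subxx S)))).
split=> //; exists phi; rewrite img_ffun img_id; split=> //.
- exact (fs_img fsH Hphi).
- by rewrite img_morph //; case: (fs_hom fsH Hphi).
- by move=> x _; rewrite ffunE.
Qed.

Lemma adj_rep_onto_P (phi0 phi : mors gT) : F Q N phi0 -> img phi0 Q = P -> F Q S phi ->
  adjQ (inr (rep_cls F Q N (NF S F P) phi0)) (inl (rep_cls F Q S H phi)).
Proof.
move=> Fphi0 phi0P Fphi.
have QP : conj_to S H Q P.
  apply/(conj_to_img_gen fsF fsH sHF sPS genF Fphi0 (subxx Q)); rewrite phi0P.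
  by exists id; [exact (fs_incl fsH sPS (subxx S)) | rewrite img_id].
have [h Hh hP] := (conj_to_img_gen fsF fsH sHF sPS genF Fphi (subxx Q)).1 QP.
pose psi : mors gT := [ffun x => h (phi x)].
have [phiM _ _] := fs_hom fsF Fphi; have [hM _ _] := fs_hom fsH Hh.
have psi_hphi : img psi Q = img h (img phi Q) by rewrite img_comp // img_ffun.
have psiP : img psi Q = P by rewrite psi_hphi.
have FpsiN : F Q N psi.
  apply: (fs_restr fsF (fs_ffun fsF (fs_comp fsF (fs_img fsF Fphi) (sHF Hh))) (subxx Q) sNS).
  by rewrite (subset_trans (imset_sub_img _ _)) // psiP.
have phi_psi : rep_rel F Q S H phi psi.
  split; first exact (fs_widen fsF FpsiN).
  exists h; rewrite psi_hphi; split=> //.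
  - exact (fs_img fsH Hh).
  - by rewrite (img_morph hM).
  - by move=> x _; rewrite ffunE.
have phi0_psi : rep_rel F Q N (NF S F P) phi0 psi.
  apply: (rep_rel_NF_onto sPS _ FpsiN phi0P psiP).
  by apply: (rep_rel_img_eq fsF Fphi0 FpsiN); rewrite phi0P psiP.
rewrite (rep_cls_eq gpdF2 Fphi0 phi0_psi) (rep_cls_eq gpdH Fphi phi_psi).
exact: adj_rep_edge FpsiN.
Qed.

Lemma rep_graph_connected : {in Vs &, forall u v, connect adjQ u v}.
Proof.
case: (classic (conj_into S F Q P)) => [[phi0 Fphi0 phi0P] | notQP].
  have {}phi0P : img phi0 Q = P.
    apply/val_inj/eqP; rewrite eqEproper phi0P; apply/negP => ltP.
    by apply: notP; exists phi0.
  pose psi0 : mors gT := [ffun x => phi0 x].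
  have Fpsi0 : F Q N psi0.
    apply: (fs_restr fsF (fs_ffun fsF Fphi0) (subxx Q) sNS).
    by rewrite (subset_trans (imset_sub_img _ _)) // img_ffun phi0P.
  have psi0P : img psi0 Q = P by rewrite img_ffun.
  apply: (connect_adj_hub (w := inr (rep_cls F Q N (NF S F P) psi0))).
  move=> u /rep_vertexP[[phi Fphi ->] | [phi Fphi ->]].
    by rewrite connect_adj_sym; apply/connect1/adj_rep_onto_P.
  apply: connect_trans (connect1 (adj_rep_edge Fphi)) _.
  by rewrite connect_adj_sym; apply/connect1/adj_rep_onto_P; last exact (fs_widen fsF Fphi).
apply: (connect_adj_hub (w := inl (rep_cls F Q S H [ffun x => x]))).
move=> u /rep_vertexP[[phi Fphi ->] | [phi Fphi ->]].
  by rewrite (rep_cls_H_id notQP Fphi) connect0.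
rewrite -(rep_cls_H_id notQP (fs_widen fsF Fphi)).
exact/connect1/adj_rep_edge.
Qed.

Lemma rep_graph_tree : is_tree Vs Es end1 end2.
Proof.
split.
- apply/set0Pn; exists (inl (rep_cls F Q S H [ffun x => x])).
  rewrite !inE; apply/orP; left; apply: imset_f; rewrite inE; apply/asbP.
  exact (fs_ffun fsF (fs_incl fsF sQS (subxx S))).
- exact: rep_graph_connected.
- exact: marked_acyclic rep_ends_sep unmarked_rep_end1_inj marked_rep_end2_inj.
Qed.

Lemma rep_graph_H1_zero (R : comPzRingType) : H1_zero Vs Es end1 end2 R.
Proof.
exact (marked_H1_zero rep_ends_sep unmarked_rep_end1_inj marked_rep_end2_inj rep_edge_ends_in).
Qed.

End RepGraph.

Unset Implicit Arguments.
Set Strict Implicit.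

Theorem corollary4p3 (gT : finGroupType) (p : nat) (S : {group gT})
    (F H : fmor gT) (C : {group gT} -> Prop) (P : {group gT}) :
  prime p -> p.-group S ->
  saturated p S F -> saturated p S H -> subsystem H F ->
  (* C : a family of subgroups of S, closed under F-conjugation and overgroups *)
  (forall Q : {group gT}, C Q -> Q \subset S) ->
  (forall (Q : {group gT}) f, C Q -> F Q S f -> C (img f Q)) ->
  (forall Q R : {group gT}, C Q -> Q \subset R -> R \subset S -> C R) ->
  C P -> P \subset S -> fully_normalized S F P ->
  (* F = < H, Aut_F(P) >_S *)
  generated_by S (fun A B f => H A B f \/ [/\ A = P, B = P & F P P f]) F ->
  let S' := 'N_S(P)%G in
  let F1 := H in
  let F2 := NF S F P in
  let Fe := NF S H P in
  let V := RepV F F1 F2 in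
  let E Q := RepE F Fe Q S' in
  let e1 Q := RepEnd1 F F1 Q S in
  let e2 Q := RepEnd2 F F2 Q S' in
  (forall Q : {group gT}, Q \subset S ->
     ~ (exists f, F Q S f /\ img f Q \proper P) ->
     is_tree (V Q S S') (E Q) (e2 Q) (e1 Q) /\
     forall R : comPzRingType, H1_zero (V Q S S') (E Q) (e2 Q) (e1 Q) R) /\
  ((forall Q : {group gT}, C Q -> Q \subset P -> (Q : {set gT}) = P) ->
     forall Q : {group gT}, C Q ->
     forall R : comPzRingType, H1_zero (V Q S S') (E Q) (e2 Q) (e1 Q) R).
Proof.
move=> _ _ [fsF _ _] [fsH _ _] sHF _ Cconj _ _ sPS _ genF; cbv zeta.
split=> [Q sQS notP | minP Q CQ R].
  split; first exact (rep_graph_tree fsF fsH sHF sPS genF sQS notP).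
  by move=> R; apply: (rep_graph_H1_zero fsF fsH sHF sPS genF notP).
apply: (rep_graph_H1_zero fsF fsH sHF sPS genF) => -[f [Ff ltfP]].
have := minP _ (Cconj _ _ CQ Ff) (proper_sub ltfP).
by move: ltfP; rewrite properEneq => /andP[/eqP].
Qed.
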